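(* Let $G$ be a directed acyclic graph with $n$ vertices, including special vertices $s$ and $t$, in which each edge $e$ carries a weight function $w_e(x)=a_e x+b_e$ ($a_e,b_e\in\mathbb{R}$). For an $s$-$t$ path $P=(e_1,\dots,e_r)$ let $\mathsf{cost}(P)(x)=w_{e_r}(w_{e_{r-1}}(\cdots w_{e_1}(x)\cdots))$, and let $\mathcal{P}$ be the set of $s$-$t$ paths in $G$. Then $\mathsf{cost}_G(x)=\min_{P\in\mathcal{P}}\mathsf{cost}(P)(x)$ is a piecewise linear function of $x\in\mathbb{R}$ whose number of pieces $p(\mathsf{cost}_G)$ satisfies $p(\mathsf{cost}_G)\le n^{\log n+O(1)}$.
   Context: For a piecewise linear function $f:\mathbb{R}\to\mathbb{R}$, $p(f)$ denotes its number of (maximal linear) pieces. Logarithms are base 2. *)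

From HB Require Import structures.
From mathcomp Require Import all_boot all_order all_algebra.
From mathcomp Require Import reals exp.
Set Implicit Arguments. Unset Strict Implicit. Unset Printing Implicit Defensive.
Import Order.TTheory GRing.Theory Num.Theory.
Local Open Scope ring_scope.

Section Defs.
Variable R : realType.

(* A directed graph on vertex set 'I_n is an edge relation E (simple: at most
   one edge per ordered pair).  It is acyclic if no nonempty directed walk
   returns to its starting vertex. *)
Definition acyclic (n : nat) (E : rel 'I_n) : Prop :=
  forall (v : 'I_n) (p : seq 'I_n), path E v p -> p != [::] -> last v p != v.

Definition st_path (n : nat) (E : rel 'I_n) (s t : 'I_n) (p : seq 'I_n) : Prop :=
  path E s p /\ last s p = t.

Fixpoint path_cost (n : nat) (a b : 'I_n -> 'I_n -> R) (u : 'I_n)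
    (p : seq 'I_n) (x : R) : R :=
  match p with
  | [::] => x
  | v :: p' => path_cost a b v p' (a u v * x + b u v)
  end.

Definition is_min_cost (n : nat) (E : rel 'I_n) (a b : 'I_n -> 'I_n -> R)
    (s t : 'I_n) (f : R -> R) : Prop :=
  forall x : R,
    (exists p, st_path E s t p /\ f x = path_cost a b s p x) /\
    (forall p, st_path E s t p -> f x <= path_cost a b s p x).

(* f is piecewise linear with at most k (maximal linear) pieces:
   there are breakpoints xs_0 < ... < xs_(m-1), m + 1 <= k, such that f is
   affine on each of the closed intervals (-oo, xs_0], [xs_0, xs_1], ...,
   [xs_(m-1), +oo). *)
Definition pieces_le (f : R -> R) (k : nat) : Prop :=
  exists xs : seq R,
    sorted <%R xs /\ (size xs < k)%N /\
    forall i : nat, (i <= size xs)%N ->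
      exists alpha beta : R, forall x : R,
        ((0 < i)%N -> nth 0 xs i.-1 <= x) ->
        ((i < size xs)%N -> x <= nth 0 xs i) ->
        f x = alpha * x + beta.

Definition log2 (y : R) : R := ln y / ln 2.

End Defs.

From HB Require Import structures.
From mathcomp Require Import all_boot all_order all_algebra.
From mathcomp Require Import reals exp boolp.
From mathcomp Require Import ring lra zify.
Import Order.TTheory GRing.Theory Num.Theory.
Local Open Scope ring_scope.
Set Implicit Arguments. Unset Strict Implicit. Unset Printing Implicit Defensive.

(* Each path cost is an affine function of x, so cost_G is the lower envelope of
   the lines realised by s-t paths, and an envelope of m lines has at most m pieces;
   the point is to find few lines that suffice.  By divide and conquer on the path
   length, for all u, v we keep at most 2 (8n)^j lines below (Lo) and above (Hi) the
   cost of every u-v path with at most 2^j edges.  A path with 2^(j+1) edges costs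
   g(c), with c the cost of its first half and g affine, so g(c) >= g(min Lo) or
   g(c) >= g(max Hi).  For finite sets G, H of lines, x |-> min_G g(min_H h(x)) needs
   only 2(|G| + |H|) composed lines: the minimiser of H has decreasing slope in x, so
   on either side of its sign change min_H is monotone and the minimiser of G at
   min_H(x) has monotone slope too. *)

Section ArgMin.
Context {d : Order.disp_t} {X : orderType d} {T : eqType} (phi : T -> X).

Definition argmin (x0 : T) (s : seq T) : T :=
  foldr (fun y z => if (phi y <= phi z)%O then y else z) x0 s.

Lemma argmin_cons_mem x0 s : argmin x0 s \in x0 :: s.
Proof.
elim: s => [|y s IH] /=; first exact: mem_head.
case: ifP => _; first by rewrite !in_cons eqxx orbT.
by move: IH; rewrite !in_cons => /orP[->|->]; rewrite ?orbT.
Qed.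

Lemma argmin_mem x0 s : x0 \in s -> argmin x0 s \in s.
Proof. by have := argmin_cons_mem x0 s; rewrite in_cons => /orP[/eqP->|]. Qed.

Lemma argmin_le x0 s y : y \in s -> (phi (argmin x0 s) <= phi y)%O.
Proof.
elim: s => //= z s IH; rewrite in_cons => /orP[/eqP->|/IH ys]; case: ifP => // h.
- by move/negbT: h; rewrite -ltNge => /ltW.
- exact: le_trans ys.
Qed.

Lemma exists_argmin x0 (s : seq T) : x0 \in s ->
  exists2 m, m \in s & forall y, y \in s -> (phi m <= phi y)%O.
Proof. by move=> x0s; exists (argmin x0 s); [apply: argmin_mem | apply: argmin_le]. Qed.

End ArgMin.

Lemma size_flatten_map_le (T U : Type) (F : T -> seq U) (s : seq T) (K : nat) :
  (forall x, size (F x) <= K)%N -> (size (flatten (map F s)) <= size s * K)%N.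
Proof. by move=> FK; elim: s => //= x s IH; rewrite size_cat mulSn leq_add. Qed.

Definition rank {T : Type} (r : rel T) (s : seq T) (x : T) := count (r x) s.

Section Rank.
Variables (T : eqType) (r : rel T).

Lemma count_lt_subpred (a b : pred T) s y :
  subpred a b -> y \in s -> b y -> ~~ a y -> (count a s < count b s)%N.
Proof.
move=> ab + by' nay; elim: s => // z s IH; rewrite in_cons /=.
case: (y =P z) => [<- _|_ /IH]; first by rewrite by' (negbTE nay) add1n ltnS sub_count.
by move=> lt; rewrite -addnS leq_add //; case: (a z) (ab z) => // ->.
Qed.

Lemma rank_lt_size s x : irreflexive r -> x \in s -> (rank r s x < size s)%N.
Proof.
by move=> irr xs; rewrite -count_predT; apply: (count_lt_subpred _ xs); rewrite ?irr.
Qed.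

Lemma rank_lt s x y : transitive r -> irreflexive r -> r y x -> x \in s ->
  (rank r s x < rank r s y)%N.
Proof.
move=> tr irr ryx xs; apply: (count_lt_subpred _ xs ryx); last by rewrite irr.
by move=> z; apply: tr.
Qed.

End Rank.

Lemma potential_cover {d : Order.disp_t} {X : orderType d} {T : eqType}
    (U : seq T) (P : X -> Prop) (sel : X -> T) (pot : T -> nat) (N : nat) :
  (forall x, P x -> sel x \in U) -> (forall x, P x -> (pot (sel x) < N)%N) ->
  (forall x1 x2, (x1 < x2)%O -> P x1 -> P x2 ->
     sel x1 = sel x2 \/ (pot (sel x1) < pot (sel x2))%N) ->
  exists s, [/\ (size s <= N)%N, {subset s <= U} & forall x, P x -> sel x \in s].
Proof.
move=> selU potN pot_mono.
pose s := undup [seq p <- U | `[< exists2 x, P x & sel x = p >]].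
have s_sel p : p \in s -> exists2 x, P x & sel x = p.
  by rewrite mem_undup mem_filter => /andP[/asboolP].
have pot_inj : {in s &, injective pot}.
  move=> _ _ /s_sel[x1 P1 <-] /s_sel[x2 P2 <-] e.
  case: (ltgtP x1 x2) => [lt|gt|-> //].
    by case: (pot_mono _ _ lt P1 P2) => //; rewrite e ltnn.
  by case: (pot_mono _ _ gt P2 P1) => //; rewrite e ltnn.
exists s; split.
- rewrite -(size_map pot) -(size_iota 0 N); apply: uniq_leq_size.
    by rewrite map_inj_in_uniq ?undup_uniq.
  by move=> _ /mapP[p /s_sel[x Px <-] ->]; rewrite mem_iota add0n potN.
- by move=> p; rewrite mem_undup mem_filter => /andP[].
- move=> x Px; rewrite mem_undup mem_filter selU // andbT.
  by apply/asboolP; exists x.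
Qed.

Section Lines.
Variable R : realFieldType.

Definition line := (R * R)%type.

Definition lev (l : line) (x : R) : R := l.1 * x + l.2.
Definition lcomp (g h : line) : line := (g.1 * h.1, g.1 * h.2 + g.2).
Definition lopp (l : line) : line := (- l.1, - l.2).
Definition lrefl (l : line) : line := (- l.1, l.2).

Lemma lev_comp g h x : lev (lcomp g h) x = lev g (lev h x).
Proof. by rewrite /lev /=; ring. Qed.

Lemma lev_opp l x : lev (lopp l) x = - lev l x.
Proof. by rewrite /lev /=; ring. Qed.

Lemma lev_refl l x : lev (lrefl l) x = lev l (- x).
Proof. by rewrite /lev /=; ring. Qed.

Lemma lcomp_refl_opp g h : lcomp (lrefl g) (lopp h) = lcomp g h.
Proof. by rewrite /lcomp /= !mulrNN. Qed.

Lemma lopp_comp_opp g h : lopp (lcomp (lopp g) h) = lcomp g h.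
Proof. by rewrite /lopp /lcomp /= !mulNr !opprK opprD !opprK. Qed.

Lemma crossing_slope h1 h2 x1 x2 : x1 < x2 ->
  lev h1 x1 <= lev h2 x1 -> lev h2 x2 <= lev h1 x2 -> h2.1 < h1.1 \/ h1 = h2.
Proof.
case: h1 h2 => [a1 b1] [a2 b2]; rewrite /lev /= => lt12 le1 le2.
case: (ltgtP a1 a2) => [lt|gt|eq]; [exfalso; nra | by left | right].
by rewrite eq; congr pair; nra.
Qed.

Lemma lev_between g y c z : y <= c -> c <= z ->
  lev g y <= lev g c \/ lev g z <= lev g c.
Proof. by rewrite /lev => yc cz; case: (lerP 0 g.1) => ?; [left | right]; nra. Qed.

Definition below (S : seq line) (x c : R) := exists2 l, l \in S & lev l x <= c.
Definition above (S : seq line) (x c : R) := exists2 l, l \in S & c <= lev l x.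

Lemma below_sub S S' x c : {subset S <= S'} -> below S x c -> below S' x c.
Proof. by move=> SS' [l /SS' lS' lc]; exists l. Qed.

Lemma above_sub S S' x c : {subset S <= S'} -> above S x c -> above S' x c.
Proof. by move=> SS' [l /SS' lS' lc]; exists l. Qed.

Section Selection.
Variables (G H : seq line) (g0 h0 : line).
Hypotheses (g0G : g0 \in G) (h0H : h0 \in H).

Let selH x := argmin (lev^~ x) h0 H.
Let minH x := lev (selH x) x.
Let selG y := argmin (lev^~ y) g0 G.
Let sel x := (selG (minH x), selH x).

Let selH_mem x : selH x \in H.
Proof. exact: (@argmin_mem _ R _ (lev^~ x)). Qed.

Let selG_mem y : selG y \in G.
Proof. exact: (@argmin_mem _ R _ (lev^~ y)). Qed.

Let selH_min x h : h \in H -> minH x <= lev h x.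
Proof. exact: (@argmin_le _ R _ (lev^~ x)). Qed.

Let selG_min y g : g \in G -> lev (selG y) y <= lev g y.
Proof. exact: (@argmin_le _ R _ (lev^~ y)). Qed.

Let selH_step x1 x2 : x1 < x2 -> (selH x2).1 < (selH x1).1 \/ selH x1 = selH x2.
Proof. by move=> lt; apply: crossing_slope lt (selH_min _ _) (selH_min _ _). Qed.

Let selG_step y1 y2 : y1 <= y2 -> (selG y2).1 < (selG y1).1 \/ selG y1 = selG y2.
Proof.
rewrite le_eqVlt => /orP[/eqP-> | lt]; first by right.
by apply: crossing_slope lt (selG_min _ _) (selG_min _ _).
Qed.

(* The potential ranks the slopes of the two minimisers; [r] orders the slopes of
   [G] in the direction in which they move on the half line described by [P]. *)
Let sel_cover (r : rel R) (P : R -> Prop) : transitive r -> irreflexive r ->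
  (forall x1 x2, x1 < x2 -> P x1 -> P x2 ->
     r (selG (minH x2)).1 (selG (minH x1)).1 \/ selG (minH x1) = selG (minH x2)) ->
  exists s, [/\ (size s <= size G + size H)%N, {subset s <= allpairs pair G H}
    & forall x, P x -> sel x \in s].
Proof.
move=> tr irr G_step.
have lt_tr : transitive (@Order.lt _ R) by move=> ? ? ?; apply: lt_trans.
have lt_irr : irreflexive (@Order.lt _ R) by move=> ?; apply: ltxx.
pose pot (p : line * line) :=
  (rank <%R (map fst H) p.2.1 + rank r (map fst G) p.1.1)%N.
apply: (@potential_cover _ _ _ (allpairs pair G H) P sel pot) => [x _ | x _ | x1 x2 lt P1 P2].
- exact: allpairs_f.
- rewrite /pot addnC -addnS -(size_map fst G) -(size_map fst H).
  apply: leq_add; first apply: ltnW.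
    exact: rank_lt_size irr (map_f _ (selG_mem _)).
  exact: rank_lt_size lt_irr (map_f _ (selH_mem _)).
have H_rank : (selH x2).1 < (selH x1).1 ->
    (rank <%R (map fst H) (selH x1).1 < rank <%R (map fst H) (selH x2).1)%N.
  by move=> Hlt; have := rank_lt lt_tr lt_irr Hlt (map_f fst (selH_mem x1)).
have G_rank : r (selG (minH x2)).1 (selG (minH x1)).1 ->
    (rank r (map fst G) (selG (minH x1)).1 < rank r (map fst G) (selG (minH x2)).1)%N.
  by move=> Glt; have := rank_lt tr irr Glt (map_f fst (selG_mem (minH x1))).
rewrite /sel /pot /=.
case: (selH_step lt) => [/H_rank Hlt | ->]; case: (G_step _ _ lt P1 P2) => [/G_rank Glt | ->];
  try by left.
- by right; rewrite -addnS leq_add // ltnW.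
- by right; rewrite ltn_add2r.
- by right; rewrite ltn_add2l.
Qed.

Lemma comp_cover_nonempty : exists T, [/\ (size T <= 2 * (size G + size H))%N,
  {subset T <= allpairs lcomp G H} &
  forall x h g, h \in H -> (forall h', h' \in H -> lev h x <= lev h' x) -> g \in G ->
    below T x (lev g (lev h x))].
Proof.
have minH_up x1 x2 : x1 <= x2 -> 0 <= (selH x2).1 -> minH x1 <= minH x2.
  move=> le ge0; apply: le_trans (selH_min _ (selH_mem x2)) _; rewrite /minH /lev; nra.
have minH_down x1 x2 : x1 <= x2 -> (selH x1).1 <= 0 -> minH x2 <= minH x1.
  move=> le le0; apply: le_trans (selH_min _ (selH_mem x1)) _; rewrite /minH /lev; nra.
have [s1 [sz1 sub1 cov1]] : exists s, [/\ (size s <= size G + size H)%N,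
    {subset s <= allpairs pair G H} & forall x, 0 <= (selH x).1 -> sel x \in s].
  apply: (@sel_cover <%R) => [? ? ? | ? | x1 x2 lt _ P2]; [exact: lt_trans | exact: ltxx |].
  exact: selG_step (minH_up _ _ (ltW lt) P2).
have [s2 [sz2 sub2 cov2]] : exists s, [/\ (size s <= size G + size H)%N,
    {subset s <= allpairs pair G H} & forall x, (selH x).1 <= 0 -> sel x \in s].
  apply: (@sel_cover >%R) => [? ? ? h1 h2 | ? | x1 x2 lt P1 _].
  - exact: lt_trans h2 h1.
  - exact: ltxx.
  by case: (selG_step (minH_down _ _ (ltW lt) P1)) => [|->]; [left | right].
exists [seq lcomp p.1 p.2 | p <- s1 ++ s2]; split.
- by rewrite size_map size_cat mulSn mul1n leq_add.
- move=> _ /mapP[p + ->]; rewrite mem_cat => /orP[/sub1 | /sub2];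
    by case/allpairsP => -[g h] [gG hH ->]; apply: allpairs_f.
- move=> x h g hH h_min gG; have sel_s : sel x \in s1 ++ s2.
    by rewrite mem_cat; case: (lerP 0 (selH x).1) => [/cov1 | /ltW /cov2] ->; rewrite ?orbT.
  have -> : lev h x = minH x by apply/le_anti; rewrite selH_min ?h_min.
  exists (lcomp (selG (minH x)) (selH x)).
    exact: (map_f (fun p : line * line => lcomp p.1 p.2) sel_s).
  by rewrite lev_comp selG_min.
Qed.

End Selection.

Lemma comp_cover G H : exists T, [/\ (size T <= 2 * (size G + size H))%N,
  {subset T <= allpairs lcomp G H} &
  forall x h g, h \in H -> (forall h', h' \in H -> lev h x <= lev h' x) -> g \in G ->
    below T x (lev g (lev h x))].
Proof.
case: G => [|g0 G]; first by exists [::].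
case: H => [|h0 H]; first by exists [::].
exact: comp_cover_nonempty (mem_head _ _) (mem_head _ _).
Qed.

Lemma comp_below G Hlo Hhi : exists T,
  [/\ (size T <= 2 * (2 * size G + size Hlo + size Hhi))%N,
   {subset T <= allpairs lcomp G (Hlo ++ Hhi)} &
   forall x c z, below Hlo x c -> above Hhi x c -> below G c z -> below T x z].
Proof.
have [T1 [sz1 sub1 cov1]] := comp_cover G Hlo.
have [T2 [sz2 sub2 cov2]] := comp_cover (map lrefl G) (map lopp Hhi).
exists (T1 ++ T2); split.
- by move: sz1 sz2; rewrite size_cat !size_map; lia.
- move=> t; rewrite mem_cat => /orP[/sub1 | /sub2] /allpairsP[[g h] /= [gG hH ->]].
    by apply: allpairs_f; rewrite // mem_cat hH.
  case/mapP: gG hH => g' g'G -> /mapP[h' h'H ->]; rewrite lcomp_refl_opp.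
  by apply: allpairs_f; rewrite // mem_cat h'H orbT.
(* [lev g c] is at least the value of [g] at one end of [min Hlo, max Hhi]; the
   upper end is the lower end for the negated [Hhi], compensated by reflecting [G]. *)
move=> x c z [h1 h1lo h1c] [h2 h2hi ch2] [g gG gcz].
have [lo lo_mem lo_min] := exists_argmin (lev^~ x) h1lo.
have [_ /mapP[hi hi_mem ->] hi_min] := exists_argmin (lev^~ x) (map_f lopp h2hi).
have lo_c : lev lo x <= c := le_trans (lo_min _ h1lo) h1c.
have c_hi : c <= lev hi x.
  by have := hi_min _ (map_f lopp h2hi); rewrite !lev_opp lerN2; apply: le_trans.
case: (lev_between g lo_c c_hi) => [g_lo | g_hi].
- have [t t_mem t_le] := cov1 x lo g lo_mem lo_min gG.
  exists t; first by rewrite mem_cat t_mem.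
  by apply: le_trans gcz; apply: le_trans g_lo.
- have [t t_mem t_le] := cov2 x _ _ (map_f lopp hi_mem) hi_min (map_f lrefl gG).
  exists t; first by rewrite mem_cat t_mem orbT.
  move: t_le; rewrite lev_refl lev_opp opprK => t_le.
  by apply: le_trans gcz; apply: le_trans g_hi.
Qed.

Lemma comp_above G Hlo Hhi : exists T,
  [/\ (size T <= 2 * (2 * size G + size Hlo + size Hhi))%N,
   {subset T <= allpairs lcomp G (Hlo ++ Hhi)} &
   forall x c z, below Hlo x c -> above Hhi x c -> above G c z -> above T x z].
Proof.
have [T [szT subT covT]] := comp_below (map lopp G) Hlo Hhi.
exists (map lopp T); split.
- by rewrite !size_map in szT *.
- move=> _ /mapP[t /subT /allpairsP[[g h] /= [/mapP[g' g'G ->] hH ->]] ->].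
  by rewrite lopp_comp_opp; apply: allpairs_f.
move=> x c z lo hi [g gG zg].
have [|t t_mem t_le] := covT x c (- z) lo hi.
  by exists (lopp g); rewrite ?map_f // lev_opp lerN2.
by exists (lopp t); rewrite ?map_f // lev_opp lerNr.
Qed.

End Lines.

Section Pieces.
Variable R : realType.
Implicit Types (f g : R -> R) (S : seq (line R)).

Lemma pieces_le_affine f al be : (forall x, f x = al * x + be) -> pieces_le f 1.
Proof.
by move=> fE; exists [::]; split; [|split] => // i _; exists al, be => x _ _; apply: fE.
Qed.

Lemma pieces_le_leq f k k' : (k <= k')%N -> pieces_le f k -> pieces_le f k'.
Proof.
by move=> kk' [xs [? [sz ?]]]; exists xs; split; [|split] => //; apply: leq_trans kk'.
Qed.

Lemma pieces_le_extend f g k x1 al be : pieces_le g k ->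
  (forall x, x <= x1 -> f x = g x) -> (forall x, x1 <= x -> f x = al * x + be) ->
  pieces_le f k.+1.
Proof.
move=> [xs [xs_sorted [xs_size g_aff]]] fg f_aff.
pose i := find (fun y => x1 <= y) xs.
have i_size : (i <= size xs)%N by apply: find_size.
have before_i j : (j < i)%N -> nth 0 xs j < x1.
  by move=> ji; rewrite ltNge; apply/negbT; apply: before_find.
have at_i : (i < size xs)%N -> x1 <= nth 0 xs i by rewrite -has_find; apply: nth_find.
pose ys := rcons (take i xs) x1.
have nth_ys j : (j <= i)%N -> nth 0 ys j = if j == i then x1 else nth 0 xs j.
  move=> ji; rewrite nth_rcons size_takel //.
  have [ji'|ij|//] := ltngtP j i; first by rewrite (nth_take _ ji').
  by move: (leq_trans ij ji); rewrite ltnn.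
exists ys; split; [|split].
- rewrite /ys -cats1 sorted_pairwise; last exact: lt_trans.
  rewrite pairwise_cat allrel1r -sorted_pairwise ?take_sorted //=; last exact: lt_trans.
  rewrite andbT; apply/allP => y /(nthP 0)[j]; rewrite size_takel // => ji <-.
  by rewrite (nth_take _ ji) before_i.
- by rewrite /ys size_rcons size_takel // ltnS (leq_ltn_trans i_size).
rewrite /ys size_rcons size_takel // => j; rewrite leq_eqVlt ltnS => /orP[/eqP-> | ji].
  exists al, be => x lo _; apply: f_aff.
  by move: (lo isT); rewrite nth_ys // eqxx.
have [al' [be' g_eq]] := g_aff j (leq_trans ji i_size).
exists al', be' => x lo hi; move: (hi ji); rewrite nth_ys //.
have lo' : (0 < j)%N -> nth 0 xs j.-1 <= x.
  by move=> j0; move: (lo j0); rewrite nth_ys ?ltn_eqF ?(leq_trans (leq_pred j)) // prednK.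
case: eqP => [eji x_x1 | /eqP ji' x_xj].
  by rewrite fg // g_eq // eji => /at_i; apply: le_trans x_x1.
have ji_lt : (j < i)%N by rewrite ltn_neqAle ji' ji.
by rewrite fg ?g_eq // (le_trans x_xj) // ltW // before_i.
Qed.

Definition lower_envelope (S : seq (line R)) (f : R -> R) := forall x,
  (exists2 l, l \in S & f x = lev l x) /\ (forall l, l \in S -> f x <= lev l x).

Lemma lower_envelope_argmin (l0 : line R) S : l0 \in S ->
  lower_envelope S (fun x => lev (argmin (fun l => lev l x) l0 S) x).
Proof.
move=> l0S x; split; first by exists (argmin (fun l => lev l x) l0 S); rewrite ?argmin_mem.
by move=> l lS; have := @argmin_le _ _ _ (fun l => lev l x) l0 S l lS.
Qed.

Lemma lower_envelope_line S f l0 x : lower_envelope S f -> l0 \in S ->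
  (forall l, l \in S -> lev l0 x <= lev l x) -> f x = lev l0 x.
Proof.
move=> f_env l0S l0_min; have [[l lS ->] f_le] := f_env x.
by apply/le_anti; rewrite f_le ?l0_min.
Qed.

Lemma lower_envelope_sub S S' f f' x :
  lower_envelope S f -> lower_envelope S' f' -> {subset S' <= S} ->
  (forall l, l \in S -> exists2 l', l' \in S' & lev l' x <= lev l x) -> f x = f' x.
Proof.
move=> f_env f'_env S'S dom; have [[l lS ->] f_le] := f_env x.
have [[l' l'S' ->] f'_le] := f'_env x; apply/le_anti; rewrite f_le ?S'S //=.
by have [l'' /f'_le l''_ge] := dom l lS; apply: le_trans.
Qed.

Lemma lower_envelope_pieces S f : lower_envelope S f -> pieces_le f (size S).
Proof.
have [N] := ubnP (size S); elim: N S f => // N IH S f /ltnSE S_N f_env.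
have [[l1 l1S _] _] := f_env 0.
have [lm lmS lm_min] := exists_argmin fst l1S.
pose m := lm.1; pose S0 := [seq l <- S | l.1 == m].
have lmS0 : lm \in S0 by rewrite mem_filter eqxx lmS.
have [l0 l0S0 l0_min] := exists_argmin snd lmS0.
move: l0S0; rewrite mem_filter => /andP[/eqP l0m l0S].
have l0_le_m l x : l \in S -> l.1 = m -> lev l0 x <= lev l x.
  move=> lS lm'; have := l0_min l; rewrite mem_filter lm' eqxx lS /lev lm' -l0m.
  by move=> /(_ isT) le; rewrite lerD2l.
pose S' := [seq l <- S | m < l.1].
have S'_lt : (size S' < size S)%N.
  rewrite size_filter -count_predT; apply: (count_lt_subpred _ l0S) => //.
  by rewrite /= l0m ltxx.
have S'S : {subset S' <= S} by move=> l; rewrite mem_filter => /andP[].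
have not_S' l : l \in S -> l \notin S' -> l.1 = m.
  by move=> lS; rewrite mem_filter lS andbT -leNgt => le; apply/le_anti; rewrite le lm_min.
case S'E : S' => [|l' S''].
  have f_l0 x : f x = l0.1 * x + l0.2.
    by apply: lower_envelope_line f_env l0S _ => l lS; apply/l0_le_m/not_S'; rewrite ?S'E.
  exact: pieces_le_leq (leq_ltn_trans (leq0n _) S'_lt) (pieces_le_affine f_l0).
(* [l0] has the least slope (and the least intercept among such lines): it is the
   envelope to the right of its last crossing [cross ls] with the steeper lines [S']. *)
have l'S' : l' \in S' by rewrite S'E mem_head.
pose cross l := (l0.2 - l.2) / (l.1 - m).
have le_cross l x : m < l.1 -> x <= cross l -> lev l x <= lev l0 x.
  by move=> ml; rewrite ler_pdivlMr ?subr_gt0 // /lev l0m => ?; nra.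
have ge_cross l x : m < l.1 -> cross l <= x -> lev l0 x <= lev l x.
  by move=> ml; rewrite ler_pdivrMr ?subr_gt0 // /lev l0m => ?; nra.
have S'_m l : l \in S' -> m < l.1 by rewrite mem_filter => /andP[].
have [ls lsS' ls_max] := exists_argmin (fun l => - cross l) l'S'.
have cross_max l : l \in S' -> cross l <= cross ls by move/ls_max; rewrite lerN2.
have f'_env := lower_envelope_argmin l'S'.
apply: pieces_le_leq S'_lt (pieces_le_extend (x1 := cross ls) (al := l0.1) (be := l0.2)
  (IH _ _ (leq_trans S'_lt S_N) f'_env) _ _) => x x_x1.
  apply: lower_envelope_sub f_env f'_env S'S _ => l lS.
  have [lS'|lnS'] := boolP (l \in S'); first by exists l.
  exists ls => //; apply: le_trans (le_cross _ _ (S'_m _ lsS') x_x1) _.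
  exact: l0_le_m (not_S' _ lS lnS').
apply: lower_envelope_line f_env l0S _ => l lS.
have [lS'|lnS'] := boolP (l \in S'); last exact: l0_le_m (not_S' _ lS lnS').
exact: ge_cross (S'_m _ lS') (le_trans (cross_max _ lS') x_x1).
Qed.

End Pieces.

Section Paths.
Variables (R : realType) (n : nat) (E : rel 'I_n) (a b : 'I_n -> 'I_n -> R).
Local Notation cost := (path_cost a b).
Local Notation line := (line R).

Lemma path_cost_cat u p1 p2 x : cost u (p1 ++ p2) x = cost (last u p1) p2 (cost u p1 x).
Proof. by elim: p1 u x => //= v p1 IH u x; rewrite IH. Qed.

Definition short_path j u v p := [/\ path E u p, last u p = v & (size p <= 2 ^ j)%N].

Definition cost_line j u v (l : line) :=
  exists2 p, short_path j u v p & forall x, lev l x = cost u p x.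

Lemma cost_line_comp j u w v g h :
  cost_line j w v g -> cost_line j u w h -> cost_line j.+1 u v (lcomp g h).
Proof.
move=> [p2 [P2 L2 S2] C2] [p1 [P1 L1 S1] C1]; exists (p1 ++ p2); last first.
  by move=> x; rewrite lev_comp path_cost_cat C1 C2 L1.
split; first by rewrite cat_path P1 L1 P2.
  by rewrite last_cat L1.
by rewrite size_cat expnS mul2n -addnn leq_add.
Qed.

Lemma short_path_split j u v p : short_path j.+1 u v p ->
  exists w p1 p2, [/\ p = p1 ++ p2, short_path j u w p1 & short_path j w v p2].
Proof.
move=> [pP pL pS]; exists (last u (take (2 ^ j) p)), (take (2 ^ j) p), (drop (2 ^ j) p).
move: pP pL; rewrite -{1 2}(cat_take_drop (2 ^ j) p) cat_path last_cat => /andP[P1 P2] L2.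
split; first by rewrite cat_take_drop.
  by split; rewrite // size_take_min geq_minl.
by split; rewrite // size_drop; move: pS; rewrite expnS; lia.
Qed.

Definition brackets (P : seq 'I_n -> Prop) u (Lo Hi : seq line) :=
  forall p, P p -> forall x, below Lo x (cost u p x) /\ above Hi x (cost u p x).

(* Weights may decrease, so the cheapest continuation can start from the most
   expensive prefix: upper bounds [Hi] are needed alongside lower bounds [Lo]. *)
Definition bracketing K j u v (Lo Hi : seq line) :=
  [/\ (size Lo <= K)%N, (size Hi <= K)%N,
   forall l, l \in Lo ++ Hi -> cost_line j u v l & brackets (short_path j u v) u Lo Hi].

Lemma bracketing0 u v : exists Lo Hi, bracketing 2 0 u v Lo Hi.
Proof.
pose base : seq line := (if u == v then [:: (1, 0)] else [::]) ++
  (if E u v then [:: (a u v, b u v)] else [::]).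
have base_size : (size base <= 2)%N by rewrite size_cat; case: (u == v); case: (E u v).
exists base, base; split => //.
- move=> l; rewrite mem_cat orbb mem_cat => /orP[|].
    case: eqP => // <-; rewrite mem_seq1 => /eqP ->.
    by exists [::] => // x; rewrite /lev /= mul1r addr0.
  case Euv: (E u v) => //; rewrite mem_seq1 => /eqP ->.
  by exists [:: v] => //; split; rewrite //= Euv.
move=> [|w [|w' p]] [//= pP pL _] x.
  have l_base : (1, 0) \in base by rewrite mem_cat pL eqxx mem_head.
  by split; exists (1, 0); rewrite // /lev mul1r addr0.
move: pP pL => /= /andP[Euw _] wv; subst w.
have l_base : (a u v, b u v) \in base by rewrite mem_cat Euw mem_head orbT.
by split; exists (a u v, b u v).
Qed.

Definition via j u w v p :=
  exists p1 p2, [/\ p = p1 ++ p2, short_path j u w p1 & short_path j w v p2].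

Lemma bracketing_via K j u w v L1 H1 L2 H2 :
  bracketing K j u w L1 H1 -> bracketing K j w v L2 H2 ->
  exists Lo Hi, [/\ (size Lo <= 8 * K)%N, (size Hi <= 8 * K)%N,
    forall l, l \in Lo ++ Hi -> cost_line j.+1 u v l & brackets (via j u w v) u Lo Hi].
Proof.
move=> [sL1 sH1 c1 b1] [sL2 sH2 c2 b2].
have [Lo [szLo subLo covLo]] := comp_below L2 L1 H1.
have [Hi [szHi subHi covHi]] := comp_above H2 L1 H1.
exists Lo, Hi; split.
- by apply: leq_trans szLo _; lia.
- by apply: leq_trans szHi _; lia.
- move=> l; rewrite mem_cat => /orP[/subLo | /subHi] /allpairsP[[g h] /= [gG hH ->]];
    by apply: cost_line_comp (c2 _ _) (c1 _ hH); rewrite mem_cat gG ?orbT.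
move=> _ [p1 [p2 [-> sp1 sp2]]] x; rewrite path_cost_cat.
have [lo1 hi1] := b1 p1 sp1 x; case: sp1 => _ -> _.
have [lo2 hi2] := b2 p2 sp2 (cost u p1 x).
by split; [apply: covLo lo1 hi1 lo2 | apply: covHi lo1 hi1 hi2].
Qed.

Lemma bracketingS K j : (forall u v, exists Lo Hi, bracketing K j u v Lo Hi) ->
  forall u v, exists Lo Hi, bracketing (n * (8 * K)) j.+1 u v Lo Hi.
Proof.
move=> IH u v.
have via_w w : exists LH : seq line * seq line,
    [/\ (size LH.1 <= 8 * K)%N, (size LH.2 <= 8 * K)%N,
     forall l, l \in LH.1 ++ LH.2 -> cost_line j.+1 u v l &
     brackets (via j u w v) u LH.1 LH.2].
  have [L1 [H1 br1]] := IH u w; have [L2 [H2 br2]] := IH w v.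
  by have [Lo [Hi ?]] := bracketing_via br1 br2; exists (Lo, Hi).
have [LH LH_ok] := choice via_w.
pose Lo := flatten [seq (LH w).1 | w <- enum 'I_n].
pose Hi := flatten [seq (LH w).2 | w <- enum 'I_n].
have Lo_sub w : {subset (LH w).1 <= Lo}.
  by move=> l lw; apply/flatten_mapP; exists w; rewrite ?mem_enum.
have Hi_sub w : {subset (LH w).2 <= Hi}.
  by move=> l lw; apply/flatten_mapP; exists w; rewrite ?mem_enum.
exists Lo, Hi; split.
- rewrite -{1}(size_enum_ord n); apply: size_flatten_map_le => w.
  by case: (LH_ok w).
- rewrite -{1}(size_enum_ord n); apply: size_flatten_map_le => w.
  by case: (LH_ok w).
- move=> l; rewrite mem_cat => /orP[] /flatten_mapP[w _ lw];
    by case: (LH_ok w) => _ _ c _; apply: c; rewrite mem_cat lw ?orbT.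
move=> p /short_path_split[w [p1 [p2 p_via]]] x.
have [_ _ _ /(_ p) br] := LH_ok w.
have [lo hi] := br (ex_intro _ p1 (ex_intro _ p2 p_via)) x.
by split; [apply: below_sub lo | apply: above_sub hi].
Qed.

Lemma bracketing_exists j u v : exists Lo Hi, bracketing (2 * (8 * n) ^ j) j u v Lo Hi.
Proof.
elim: j u v => [|j IH]; first exact: bracketing0.
by rewrite expnS mulnCA -mulnA mulnCA; apply: bracketingS.
Qed.

End Paths.

Lemma acyclic_path_uniq n (E : rel 'I_n) u p : acyclic E -> path E u p -> uniq (u :: p).
Proof.
move=> acyc; elim: p u => [|x p IH] u //= /andP[Eux px].
have := IH x px => /= ->; rewrite andbT; apply/negP => u_xp.
have : path E u (x :: p) by rewrite /= Eux.
case/splitPr: u_xp => p1 p2; rewrite cat_path => /andP[p1P /= /andP[Eu _]].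
have cyc : path E u (rcons p1 u) by rewrite rcons_path p1P.
by move: (acyc u _ cyc); rewrite last_rcons eqxx -size_eq0 size_rcons => /(_ isT).
Qed.

Lemma acyclic_path_size n (E : rel 'I_n) u p : acyclic E -> path E u p -> (size p < n)%N.
Proof.
move=> acyc /(acyclic_path_uniq acyc) up.
by have := uniq_leq_size up (fun z _ => mem_enum 'I_n z); rewrite size_enum_ord.
Qed.

Section MinCost.
Variables (R : realType) (n : nat) (E : rel 'I_n) (a b : 'I_n -> 'I_n -> R).
Variables (s t : 'I_n) (f : R -> R).
Hypotheses (acyc : acyclic E) (f_min : is_min_cost E a b s t f).

Lemma min_cost_lower_envelope K j Lo Hi :
  (forall p, path E s p -> (size p <= 2 ^ j)%N) -> bracketing E a b K j s t Lo Hi ->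
  lower_envelope Lo f.
Proof.
move=> short [_ _ Lo_cost Lo_br] x; have [[p [[pP pL] ->]] f_le] := f_min x.
have line_ge l : l \in Lo -> path_cost a b s p x <= lev l x.
  move=> lLo; have [|q [qP qL _] ->] := Lo_cost l; first by rewrite mem_cat lLo.
  by apply: f_le; split.
have [[l lLo lp] _] := Lo_br p (And3 pP pL (short p pP)) x.
by split => //; exists l => //; apply/le_anti; rewrite lp line_ge.
Qed.

Lemma min_cost_pieces : pieces_le f (2 * (8 * n) ^ (trunc_log 2 n).+1).
Proof.
have short p : path E s p -> (size p <= 2 ^ (trunc_log 2 n).+1)%N.
  by move=> /(acyclic_path_size acyc) /ltnW /leq_trans; apply; apply/ltnW/trunc_log_ltn.
have [Lo [Hi br]] := bracketing_exists E a b (trunc_log 2 n).+1 s t.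
have := lower_envelope_pieces (min_cost_lower_envelope short br).
by apply: pieces_le_leq; case: br.
Qed.

Lemma min_cost_single_vertex : (n <= 1)%N -> pieces_le f 1.
Proof.
move=> n_le1; apply: (pieces_le_affine (al := 1) (be := 0)) => x.
have [[p [[pP _] ->]] _] := f_min x.
have := acyclic_path_size acyc pP; case: p {pP} => [_ | v p /= p_n]; last by lia.
by rewrite /= mul1r addr0.
Qed.

End MinCost.

Lemma trunc_log_le_log2 (R : realType) n : (0 < n)%N ->
  ((trunc_log 2 n)%:R : R) <= log2 (n%:R : R).
Proof.
move=> n_gt0; have ln2_gt0 : (0 : R) < ln 2 by rewrite ln_gt0 // ltr1n.
rewrite /log2 ler_pdivlMr // mulr_natl -lnXn // -natrX.
by rewrite ler_ln ?posrE ?ltr0n ?expn_gt0 // ler_nat trunc_logP.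
Qed.

Lemma bracket_size_le n : (1 < n)%N ->
  (2 * (8 * n) ^ (trunc_log 2 n).+1 <= n ^ (trunc_log 2 n + 8))%N.
Proof.
move=> n_gt1; set k := trunc_log 2 n.
have two_k : (2 ^ k <= n)%N by apply: trunc_logP; lia.
have eight_k : (8 ^ k.+1 <= 8 * n ^ 3)%N.
  by rewrite expnS leq_mul2l /= (_ : 8 = 2 ^ 3)%N // -expnM mulnC expnM leq_exp2r.
have n4 : (16 <= n ^ 4)%N by rewrite (_ : 16 = 2 ^ 4)%N // leq_exp2r.
(* 2 * 8^(k+1) <= 16 n^3 since 8^k = (2^k)^3, and 16 <= n^4 *)
rewrite expnMn (_ : k + 8 = 4 + 3 + k.+1)%N ?expnD; last by lia.
have mono X A B C : (X <= 8 * B -> 16 <= A -> 2 * (X * C) <= A * B * C)%N.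
  move=> XB A16; have XC : (X * C <= 8 * (B * C))%N by rewrite mulnA leq_mul2r XB orbT.
  have BC : (16 * (B * C) <= A * (B * C))%N by rewrite leq_mul2r A16 orbT.
  by rewrite -mulnA; lia.
exact: mono.
Qed.

Lemma bracket_size_le_pow (R : realType) n : (1 < n)%N ->
  ((2 * (8 * n) ^ (trunc_log 2 n).+1)%N%:R : R) <= n%:R `^ (log2 n%:R + 8%:R).
Proof.
move=> n_gt1; apply: le_trans (_ : (n ^ (trunc_log 2 n + 8))%:R <= _).
  by rewrite ler_nat bracket_size_le.
rewrite natrX -powR_mulrn ?ler0n // natrD.
by apply: ler_powR; rewrite ?ler1n ?lerD2r ?trunc_log_le_log2 //; lia.
Qed.

Theorem theorem2 :
  exists C : nat, forall (R : realType) (n : nat) (E : rel 'I_n)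
    (a b : 'I_n -> 'I_n -> R) (s t : 'I_n) (f : R -> R),
    acyclic E -> is_min_cost E a b s t f ->
    exists k : nat, pieces_le f k /\
      (k%:R <= (n%:R : R) `^ (log2 (n%:R : R) + C%:R)).
Proof.
exists 8%N => R n E a b s t f acyc f_min.
have [n_le1 | n_gt1] := leqP n 1.
  exists 1%N; split; first exact: min_cost_single_vertex acyc f_min n_le1.
  have -> : n = 1%N by have := ltn_ord s; lia.
  by rewrite powR1.
exists (2 * (8 * n) ^ (trunc_log 2 n).+1)%N; split.
  exact: min_cost_pieces acyc f_min.
exact: bracket_size_le_pow.
Qed.
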